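(* Let $m\in[\frac n4..\frac n2-1]$ be an integer and $\delta\in(0,2)$. Let $x$ be a random bit string in $\{0,1\}^n$ such that $\mathrm{DLB}(x)=2m$ and such that the bits $x_i$, $i\in[2m+3..n]$, are mutually independent, independent of the other bits, and uniformly distributed in $\{0,1\}$. Let $y$ be generated from $x$ by a unary unbiased variation operator $V$, and let $Y=(\mathrm{HLB}_\delta(y)-\mathrm{HLB}_\delta(x))\mathbb{1}_{\mathrm{DLB}(y)\ge\mathrm{DLB}(x)}$. Then $E[Y]\le\frac{2\delta}{n}$.
   Context: Let $n$ be an even positive integer. For $x\in\{0,1\}^n$ consider the blocks $(x_{2\ell+1},x_{2\ell+2})$, $\ell=0,\dots,\frac n2-1$. If $x\neq(1,\dots,1)$, let $m$ be the smallest $\ell$ with $x_{2\ell+1}\neq 1$ or $x_{2\ell+2}\neq 1$, and define $\mathrm{DLB}(x)=2m+1$ if $x_{2m+1}+x_{2m+2}=0$ and $\mathrm{DLB}(x)=2m$ if $x_{2m+1}+x_{2m+2}=1$; set $\mathrm{DLB}(1,\dots,1)=n$. For $\delta\in(0,2)$, $\mathrm{HLB}_\delta(x)=2m$ if $\mathrm{DLB}(x)=2m+1$, $\mathrm{HLB}_\delta(x)=2m+2-\delta$ if $\mathrm{DLB}(x)=2m$ (for $m\in\{0,\dots,\frac n2-1\}$), and $\mathrm{HLB}_\delta(x)=n$ if $\mathrm{DLB}(x)=n$. A unary unbiased variation operator $V$ assigns to each $x\in\{0,1\}^n$ a probability distribution $V(x)$ on $\{0,1\}^n$ such that for all $x,y,z$,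 $\Pr[y=V(x)]=\Pr[y\oplus z=V(x\oplus z)]$, and for all permutations $\sigma$ of $[1..n]$, $\Pr[y=V(x)]=\Pr[\sigma(y)=V(\sigma(x))]$, where $\sigma(x)=(x_{\sigma(1)},\dots,x_{\sigma(n)})$. *)

(* Bit strings x in {0,1}^n are {ffun 'I_n -> bool};
   the paper's bit x_k (1-indexed) is x at index k-1 (0-indexed). *)
From mathcomp Require Import all_boot all_order all_algebra fingroup perm.
Set Implicit Arguments. Unset Strict Implicit. Unset Printing Implicit Defensive.
Import Order.TTheory GRing.Theory Num.Theory.

Section Defs.
Variable n : nat.
Notation bits := {ffun 'I_n -> bool}.

(* 0-indexed access by a natural number (false out of range, never used there) *)
Definition bitn (x : bits) (i : nat) : bool :=
  match insub i with Some j => x j | None => false end.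

(* block l (0-indexed) = (x_{2l+1}, x_{2l+2}) = (bitn x (2l), bitn x (2l+1)) *)
Definition blk_ones (x : bits) (l : nat) : bool :=
  bitn x (2 * l) && bitn x (2 * l + 1).

Definition firstm (x : bits) : nat :=
  find (fun l => ~~ blk_ones x l) (iota 0 n./2).

Definition DLB (x : bits) : nat :=
  let m := firstm x in
  if m == n./2 then n
  else if (bitn x (2 * m) + bitn x (2 * m + 1) == 0)%N then (2 * m + 1)%N
  else (2 * m)%N.

Definition HLB {R : numDomainType} (delta : R) (x : bits) : R :=
  let m := firstm x in
  if DLB x == n then (n%:R)%R
  else if DLB x == (2 * m + 1)%N then ((2 * m)%:R)%R
  else ((2 * m + 2)%:R - delta)%R.

Definition xorb_ff (x z : bits) : bits := [ffun i => x i (+) z i].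
Definition permb (s : 'S_n) (x : bits) : bits := [ffun i => x (s i)].

(* V x y = Pr[y = V(x)] *)
Definition unary_unbiased {R : numDomainType} (V : bits -> bits -> R) : Prop :=
  [/\ (forall x y, (0 <= V x y)%R),
      (forall x, (\sum_(y : bits) V x y = 1)%R),
      (forall x y z, V x y = V (xorb_ff x z) (xorb_ff y z)) &
      (forall (s : 'S_n) x y, V x y = V (permb s x) (permb s y))].
End Defs.

(* Since V is unbiased, V x y = f (y xor x) for a distribution f invariant under
   permutations of the positions.  Let block m be the first non-(1,1) block of x, with
   its one at position a and its zero at b.  The progress of x xor r is nonzero only if
   r leaves the first 2m bits alone and flips exactly one of a and b.  Flipping a turns
   block m into (0,0), a progress of d - 2.  Flipping b turns x into a string starting
   with m + 1 blocks (1,1) whose remaining bits are uniform; for such strings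
   HLB <= 2 (first non-(1,1) block + [that block is mixed]), and clearing a block shows
   that this has mean at most 2 (m + 1) + 2, so the mean progress is at most 2 + d.
   Both flips have the same probability p by the symmetry exchanging a and b, so the
   expected progress is at most 2 d p.  Finally p is at most the probability that b is
   the lowest flipped position; as b >= n/2 the n cyclic rotations of that event are
   pairwise disjoint, so p <= 1/n. *)

From mathcomp Require Import all_boot all_order all_algebra fingroup perm.
From mathcomp Require Import zify.
From mathcomp.algebra_tactics Require Import ring lra.
Set Implicit Arguments. Unset Strict Implicit. Unset Printing Implicit Defensive.
Import Order.TTheory GRing.Theory Num.Theory.

Lemma sum_ltn_indicator k F N : (k <= F <= N)%N ->
  (\sum_(k <= j < N) (j < F)%N = F - k)%N.
Proof.
case/andP=> le_kF le_FN; rewrite (big_cat_nat le_kF le_FN) /=.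
rewrite (eq_big_nat _ _ (F2 := fun _ => 1%N)) => [|j /andP[_ ->] //].
rewrite [X in (_ + X)%N](eq_big_nat _ _ (F2 := fun _ => 0%N)) => [|j /andP[le_j _]].
  by rewrite !sum_nat_const_nat muln0 muln1 addn0.
by rewrite ltnNge le_j.
Qed.

Lemma sum_indicator_card (T : finType) (P Q : pred T) : (forall y, Q y -> P y) ->
  (\sum_(y | P y) (Q y : nat) = #|[set y | Q y]|)%N.
Proof.
move=> QP; rewrite -sum1dep_card (bigID Q) /= addnC big1 => [|y /andP[_ /negbTE->] //].
by rewrite add0n; apply: eq_big => [y|y /andP[_ ->]] //; rewrite andb_idl //; exact: QP.
Qed.

Section Bits.
Variable n : nat.
Local Notation bits := {ffun 'I_n -> bool}.

Lemma bitn_ord (x : bits) (i : 'I_n) : bitn x i = x i.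
Proof.
by rewrite /bitn (insubT (fun i => i < n)%N (ltn_ord i)) /=; congr (x _); apply: val_inj.
Qed.

Lemma bitn_out (x : bits) p : (n <= p)%N -> bitn x p = false.
Proof. by move=> h; rewrite /bitn insubF // ltnNge h. Qed.

Lemma bitn_xor (x r : bits) p : bitn (xorb_ff x r) p = bitn x p (+) bitn r p.
Proof. by rewrite /bitn; case: insub => [i|] //; rewrite ffunE. Qed.

Lemma bitn_permb (s : 'S_n) (r : bits) (i : 'I_n) : bitn (permb s r) i = r (s i).
Proof. by rewrite bitn_ord ffunE. Qed.

Lemma xorb_ffK (r : bits) : involutive (fun y : bits => xorb_ff y r).
Proof. by move=> y; apply/ffunP => i; rewrite !ffunE -addbA addbb addbF. Qed.

Lemma xorb_ffC (x y : bits) : xorb_ff x y = xorb_ff y x.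
Proof. by apply/ffunP => i; rewrite !ffunE addbC. Qed.

Lemma permb_inj (s : 'S_n) : injective (permb s).
Proof.
move=> x y /ffunP e; apply/ffunP => i.
by have := e (s^-1 i)%g; rewrite !ffunE permKV.
Qed.

(** * The first block that is not (1,1) *)

Lemma firstm_le (x : bits) : (firstm x <= n./2)%N.
Proof. by rewrite -[leqRHS](size_iota 0) find_size. Qed.

Lemma blk_ones_before_firstm (x : bits) l : (l < firstm x)%N -> blk_ones x l.
Proof.
move=> lt_l; have := before_find 0 lt_l.
by rewrite nth_iota ?add0n => [/negbFE|]; last exact: leq_trans lt_l (firstm_le x).
Qed.

Lemma blk_ones_firstm (x : bits) : (firstm x < n./2)%N -> ~~ blk_ones x (firstm x).
Proof.
move=> lt_half; have : has (fun l => ~~ blk_ones x l) (iota 0 n./2).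
  by rewrite has_find size_iota.
by move/(nth_find 0); rewrite nth_iota.
Qed.

Lemma firstm_eq (x : bits) j : (j <= n./2)%N ->
  (forall l, (l < j)%N -> blk_ones x l) -> ((j < n./2)%N -> ~~ blk_ones x j) ->
  firstm x = j.
Proof.
move=> le_j ones_lt not_ones_j; case: (ltngtP (firstm x) j) => // lt.
  by have := blk_ones_firstm (leq_trans lt le_j); rewrite ones_lt.
have lt_j : (j < n./2)%N by apply: leq_trans lt (firstm_le x).
by have := blk_ones_before_firstm lt; rewrite (negbTE (not_ones_j lt_j)).
Qed.

Lemma bitn_blk_ones (x : bits) l p : blk_ones x l -> p./2 = l -> bitn x p.
Proof.
by case/andP=> x2l x2l1 hp; have [->|->] : p = 2 * l \/ p = 2 * l + 1 by lia.
Qed.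

Lemma bitn_lt_firstm (x : bits) p : (p < 2 * firstm x)%N -> bitn x p.
Proof.
by move=> lt_p; apply: (bitn_blk_ones (l := p./2)) => //; apply: blk_ones_before_firstm; lia.
Qed.

Lemma firstm_le_zero_bit (x : bits) p : bitn x p = false -> (firstm x <= p./2)%N.
Proof.
move=> xp; rewrite leqNgt; apply/negP => /blk_ones_before_firstm /bitn_blk_ones.
by move/(_ p erefl); rewrite xp.
Qed.

Lemma firstm_ge_ones (x : bits) k : (k <= n./2)%N ->
  (forall p, (p < 2 * k)%N -> bitn x p) -> (k <= firstm x)%N.
Proof.
move=> le_k ones; rewrite leqNgt; apply/negP => lt_k.
have := blk_ones_firstm (leq_trans lt_k le_k).
by rewrite /blk_ones !ones //; lia.
Qed.

Lemma firstm_eq_blk (x : bits) m : (m < n./2)%N ->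
  (forall p, (p < 2 * m)%N -> bitn x p) -> ~~ blk_ones x m -> firstm x = m.
Proof.
move=> lt_m ones not_ones; apply: firstm_eq => [|l lt_l|//]; first exact: ltnW.
by rewrite /blk_ones !ones //; lia.
Qed.

Definition blk_zeros (x : bits) l := (bitn x (2 * l) + bitn x (2 * l + 1) == 0)%N.

Lemma DLB_firstm (x : bits) m : firstm x = m -> (m < n./2)%N ->
  DLB x = if blk_zeros x m then (2 * m + 1)%N else (2 * m)%N.
Proof. by move=> xm lt_m; rewrite /DLB xm ifN // neq_ltn lt_m. Qed.

Lemma HLB_firstm (R : numDomainType) (d : R) (x : bits) m :
  firstm x = m -> (m < n./2)%N ->
  HLB d x = if blk_zeros x m then (2 * m)%:R%R else ((2 * m + 2)%:R - d)%R.
Proof.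
move=> xm lt_m; rewrite /HLB (DLB_firstm xm lt_m) xm.
have [ne1 ne2 ne3] : [/\ 2 * m + 1 != n, 2 * m != n & 2 * m != 2 * m + 1]%N.
  by split; apply/eqP; lia.
by case: (blk_zeros x m); rewrite ifN // ?eqxx // ifN.
Qed.

Lemma DLB_ge (x : bits) : (2 * firstm x <= DLB x)%N.
Proof. by rewrite /DLB /=; case: ifP => [/eqP->|_]; last case: ifP => _; lia. Qed.

Lemma DLB_le (x : bits) : (firstm x < n./2)%N -> (DLB x <= 2 * firstm x + 1)%N.
Proof. by move=> lt_half; rewrite (DLB_firstm erefl lt_half); case: ifP => _ //; lia. Qed.

Lemma DLB_eq_double (x : bits) m : (m < n./2)%N -> DLB x = (2 * m)%N ->
  firstm x = m /\ ~~ blk_zeros x m.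
Proof.
move=> lt_m; rewrite /DLB /=; case: ifP => [_|/negbT]; first lia.
move=> _; case: ifP => zeros eq_m; first lia.
have F : firstm x = m by lia.
by split => //; rewrite -F /blk_zeros zeros.
Qed.

Definition progress (R : numDomainType) (d : R) (x y : bits) : R :=
  ((HLB d y - HLB d x) * (DLB x <= DLB y)%N%:R)%R.

Definition ones_prefix k (y : bits) := [forall i : 'I_n, (i < 2 * k)%N ==> y i].

Lemma ones_prefixE k (y : bits) : (k <= n./2)%N -> ones_prefix k y = (k <= firstm y)%N.
Proof.
move=> le_k; apply/forallP/idP => [ones|le_kF i].
  apply: firstm_ge_ones => // p lt_p; have lt_pn : (p < n)%N by lia.
  by have := ones (Ordinal lt_pn); rewrite lt_p -bitn_ord.
by apply/implyP => lt_i; rewrite -bitn_ord bitn_lt_firstm //; lia.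
Qed.

Definition agree k (x z : bits) := [forall i : 'I_n, (i < k)%N ==> (z i == x i)].

Lemma bitn_agree k (x z : bits) p : agree k x z -> (p < k)%N -> bitn x p = bitn z p.
Proof.
move=> /forallP agr lt_p; case: (ltnP p n) => lt_pn; last by rewrite !bitn_out.
by have := agr (Ordinal lt_pn); rewrite /= lt_p -!bitn_ord => /eqP ->.
Qed.

Lemma mixed_blk_orient (x : bits) m : ~~ blk_ones x m -> ~~ blk_zeros x m ->
  exists o : bool, bitn x (2 * m + o) && ~~ bitn x (2 * m + ~~ o).
Proof.
rewrite /blk_ones /blk_zeros.
case x0: (bitn x (2 * m)); case x1: (bitn x (2 * m + 1)) => //= _ _.
  by exists false; rewrite addn0 x0 x1.
by exists true; rewrite addn0 x0 x1.
Qed.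

(** * Average of HLB over strings with a prescribed prefix of (1,1) blocks *)

Definition mixed_first (y : bits) := (firstm y < n./2)%N && ~~ blk_zeros y (firstm y).

Lemma HLB_le_mixed_first (R : realFieldType) (d : R) (y : bits) : ~~ odd n -> (0 <= d)%R ->
  (HLB d y <= (2 * (firstm y + mixed_first y))%N%:R)%R.
Proof.
move=> n_even d_ge0; rewrite /mixed_first.
have [lt_F|ge_F] := ltnP (firstm y) n./2.
  rewrite (HLB_firstm _ erefl lt_F) /=.
  by case: (blk_zeros y (firstm y)) => /=; rewrite ?addn0 // mulnDr natrD lerBlDr lerDl.
have eq_F : firstm y = n./2 by apply/eqP; rewrite eqn_leq firstm_le.
by rewrite /HLB /DLB /= eq_F !eqxx addn0 ler_nat; lia.
Qed.

Definition clear_blk j (y : bits) : bits := [ffun i : 'I_n => (i./2 != j) && y i].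

Lemma bitn_clear_blk j y p : bitn (clear_blk j y) p = (p./2 != j) && bitn y p.
Proof. by rewrite /bitn; case: insubP => [i _ <-|_]; rewrite ?ffunE ?andbF. Qed.

Lemma blk_ones_clear_blk j y l : blk_ones (clear_blk j y) l = (l != j) && blk_ones y l.
Proof.
rewrite /blk_ones !bitn_clear_blk.
have [-> ->] : (2 * l)./2 = l /\ (2 * l + 1)./2 = l by lia.
by case: (l != j).
Qed.

Lemma blk_zeros_clear_blk j y : blk_zeros (clear_blk j y) j.
Proof.
rewrite /blk_zeros !bitn_clear_blk.
have [-> ->] : (2 * j)./2 = j /\ (2 * j + 1)./2 = j by lia.
by rewrite eqxx.
Qed.

(* Clearing block j injects the strings whose first non-(1,1) block comes after j
   into those whose first such block is j and equals (0,0). *)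
Lemma card_firstm_gt_le j : (j < n./2)%N ->
  (#|[set y : bits | j < firstm y]| <= #|[set y | (firstm y == j) && blk_zeros y j]|)%N.
Proof.
move=> lt_j.
have clear_inj : {in [set y : bits | j < firstm y] &, injective (clear_blk j)}.
  move=> y1 y2; rewrite !inE => lt1 lt2 /ffunP e; apply/ffunP => i.
  have := e i; rewrite !ffunE; case: (i./2 =P j) => [ij _|_ //].
  by rewrite -!bitn_ord !(@bitn_blk_ones _ j) // blk_ones_before_firstm.
rewrite -(card_in_imset clear_inj); apply/subset_leq_card/subsetP.
move=> _ /imsetP[y + ->]; rewrite !inE => lt_y.
have -> : firstm (clear_blk j y) = j.
  apply: firstm_eq => [|l lt_l|_]; first exact: ltnW.
    by rewrite blk_ones_clear_blk (ltn_eqF lt_l) blk_ones_before_firstm //; lia.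
  by rewrite blk_ones_clear_blk eqxx.
by rewrite eqxx blk_zeros_clear_blk.
Qed.

Lemma firstm_zeros_add_mixed_le1 (y : bits) k :
  (\sum_(k <= j < n./2) ((firstm y == j) && blk_zeros y j) + mixed_first y <= 1)%N.
Proof.
rewrite (eq_bigr (fun j => if j == firstm y then blk_zeros y (firstm y) : nat else 0%N));
  last by move=> j _; rewrite eq_sym; case: eqP => [->|].
rewrite -big_mkcond big_nat1_eq /mixed_first.
by case: (k <= firstm y)%N; case: (firstm y < n./2)%N; case: blk_zeros.
Qed.

Lemma sum_firstm_mixed_le k : (k <= n./2)%N ->
  (\sum_(y : bits | k <= firstm y) (firstm y + mixed_first y) <=
   \sum_(y : bits | k <= firstm y) k.+1)%N.
Proof.
move=> le_k.
have split_firstm y : (k <= firstm y)%N ->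
    (firstm y + mixed_first y = k + (\sum_(k <= j < n./2) (j < firstm y)%N + mixed_first y))%N.
  by move=> le_y; rewrite sum_ltn_indicator ?le_y ?firstm_le //; lia.
rewrite (eq_bigr _ split_firstm) [leqRHS](eq_bigr (fun y => k + 1)%N) => [|y _];
  last by rewrite addn1.
rewrite !big_split /= leq_add2l.
apply: leq_trans (_ : _ <= \sum_(y | k <= firstm y)
  (\sum_(k <= j < n./2) ((firstm y == j) && blk_zeros y j) + mixed_first y))%N _; last first.
  by apply: leq_sum => y _; apply: firstm_zeros_add_mixed_le1.
rewrite big_split leq_add2r /= exchange_big [leqRHS]exchange_big /= big_nat [leqRHS]big_nat.
apply: leq_sum => j /andP[le_j lt_j]; rewrite !sum_indicator_card.
- exact: card_firstm_gt_le.
- by move=> y /andP[/eqP-> _].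
- by move=> y /ltnW; apply: leq_trans.
Qed.

Lemma sum_HLB_le (R : realFieldType) (d : R) k : ~~ odd n -> (0 <= d)%R -> (k <= n./2)%N ->
  (\sum_(y | ones_prefix k y) HLB d y <= \sum_(y | ones_prefix k y) (2 * k + 2)%N%:R)%R.
Proof.
move=> n_even d_ge0 le_k; rewrite !(eq_bigl _ _ (fun y => ones_prefixE y le_k)).
apply: le_trans (_ : _ <= \sum_(y | (k <= firstm y)%N) (2 * (firstm y + mixed_first y))%N%:R)%R _.
  by apply: ler_sum => y _; apply: HLB_le_mixed_first.
rewrite -!natr_sum ler_nat [leqRHS](eq_bigr (fun y => 2 * k.+1)%N) => [|y _]; last lia.
by rewrite -!big_distrr /= leq_mul2l sum_firstm_mixed_le.
Qed.

(** * Permutation-invariant distributions *)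

Definition rot_fun (c j : 'I_n) : 'I_n :=
  Ordinal (ltn_pmod (j + c) (leq_ltn_trans (leq0n _) (ltn_ord c))).

Lemma rot_fun_inj c : injective (rot_fun c).
Proof.
move=> j1 j2 /(congr1 val) /= /eqP; rewrite eqn_modDr !modn_small // => /eqP.
exact: val_inj.
Qed.

Definition rot (c : 'I_n) : 'S_n := perm (@rot_fun_inj c).

Lemma rotE c j : val (rot c j) = ((j + c) %% n)%N.
Proof. by rewrite permE. Qed.

Definition lowest_one (b : 'I_n) (r : bits) := r b && [forall i : 'I_n, (i < b)%N ==> ~~ r i].

(* Each rotated window has length b + 1 > n / 2, so the set bit of one window
   falls among the cleared bits of any other. *)
Lemma lowest_one_rot_disjoint (b : 'I_n) (r : bits) c1 c2 : (n <= 2 * b)%N -> c1 != c2 ->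
  ~~ (lowest_one b (permb (rot c1) r) && lowest_one b (permb (rot c2) r)).
Proof.
move=> le_n2b; wlog lt12 : c1 c2 / (c1 < c2)%N.
  move=> wl ne12; case: (ltngtP c1 c2) => [lt12|lt21|/val_inj eq12]; first exact: wl.
    by rewrite andbC wl // eq_sym.
  by rewrite eq12 eqxx in ne12.
move=> _; have [lt_b lt_c2] := (ltn_ord b, ltn_ord c2); rewrite /lowest_one !ffunE.
apply/negP => /andP[/andP[r1 /forallP zeros1] /andP[r2 /forallP zeros2]].
have [le_diff|lt_diff] := leqP (c2 - c1) b.
  have lt_i : (b - (c2 - c1) < n)%N by lia.
  have e : rot c2 (Ordinal lt_i) = rot c1 b by apply: val_inj; rewrite !rotE /=; congr modn; lia.
  by have := zeros2 (Ordinal lt_i); rewrite ffunE e r1 implybF /=; lia.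
have lt_i : (b + (c2 - c1) - n < n)%N by lia.
have e : rot c1 (Ordinal lt_i) = rot c2 b.
  apply: val_inj; rewrite !rotE /=.
  have -> : (b + c2 = b + (c2 - c1) - n + c1 + n)%N by lia.
  by rewrite modnDr.
by have := zeros1 (Ordinal lt_i); rewrite ffunE e r2 implybF /=; lia.
Qed.

Section SymmetricDistribution.
Local Open Scope ring_scope.
Variables (R : realFieldType) (f : bits -> R).
Hypothesis f_ge0 : forall r, 0 <= f r.
Hypothesis f_sum1 : \sum_r f r = 1.
Hypothesis f_permb : forall s r, f (permb s r) = f r.

Lemma sum_permb (s : 'S_n) (P : pred bits) :
  \sum_(r | P r) f r = \sum_(r | P (permb s r)) f r.
Proof. by rewrite (reindex_inj (@permb_inj s)); apply: eq_bigr => r _; rewrite f_permb. Qed.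

Lemma sum_disjoint_translates_le (I : finType) (s : I -> 'S_n) (P : pred bits) :
  (forall r i j, i != j -> ~~ (P (permb (s i) r) && P (permb (s j) r))) ->
  #|I|%:R * \sum_(r | P r) f r <= 1.
Proof.
move=> disj; rewrite mulr_natl -sumr_const -f_sum1.
rewrite (eq_bigr (fun i => \sum_r (if P (permb (s i) r) then f r else 0))) => [|i _]; last first.
  by rewrite (sum_permb (s i)) big_mkcond.
rewrite exchange_big /=; apply: ler_sum => r _.
case: (pickP (fun i => P (permb (s i) r))) => [i Pi|none]; last first.
  by rewrite big1 // => i _; rewrite none.
rewrite (bigD1 i) //= Pi big1 ?addr0 // => j ne_ji.
by have := disj r j i ne_ji; rewrite Pi andbT => /negbTE->.
Qed.

Lemma sum_lowest_one_le (b : 'I_n) : (n <= 2 * b)%N -> \sum_(r | lowest_one b r) f r <= n%:R^-1.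
Proof.
move=> le_n2b; have n_gt0 : (0 < n%:R :> R) by rewrite ltr0n (leq_ltn_trans _ (ltn_ord b)).
rewrite -[leRHS]mul1r ler_pdivlMr // mulrC.
have := sum_disjoint_translates_le (fun r c1 c2 => lowest_one_rot_disjoint r le_n2b).
by rewrite card_ord.
Qed.

(** * One mutation of a string whose first non-(1,1) block is block m *)

Section Block.
Variables (d : R) (m : nat) (o : bool).
Hypothesis lt_m : (m < n./2)%N.
Local Notation a := (2 * m + o)%N.
Local Notation b := (2 * m + ~~ o)%N.

Lemma blk_ones_ab (y : bits) : blk_ones y m = bitn y a && bitn y b.
Proof. by rewrite /blk_ones; case: o; rewrite ?addn0 ?addn1 // andbC. Qed.

Lemma blk_zeros_ab (y : bits) : blk_zeros y m = ~~ bitn y a && ~~ bitn y b.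
Proof.
by rewrite /blk_zeros; case: o; rewrite ?addn0 ?addn1 /=; do 2!case: bitn.
Qed.

Definition first_blk_ab (x : bits) := [&& firstm x == m, bitn x a & ~~ bitn x b].

Lemma first_blk_ab_agree x w : first_blk_ab x -> agree (2 * m + 2) w x -> first_blk_ab w.
Proof.
case/and3P=> /eqP x_m x_a x_b agr.
have same p : (p < 2 * m + 2)%N -> bitn w p = bitn x p by apply: bitn_agree.
have [lt_a lt_b] : (a < 2 * m + 2)%N /\ (b < 2 * m + 2)%N by case: o {x_a x_b} => /=; lia.
rewrite /first_blk_ab !same // x_a x_b !andbT; apply/eqP; apply: firstm_eq_blk => // [p lt_p|].
  by rewrite same ?bitn_lt_firstm ?x_m //; lia.
by rewrite blk_ones_ab !same // (negbTE x_b) andbF.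
Qed.

Definition keeps_prefix (r : bits) := [forall i : 'I_n, (i < 2 * m)%N ==> ~~ r i].
Definition flips_one (r : bits) := [&& bitn r a, ~~ bitn r b & keeps_prefix r].
Definition flips_zero (r : bits) := [&& bitn r b, ~~ bitn r a & keeps_prefix r].

Lemma flips_zero_indicator : flips_zero [ffun i : 'I_n => nat_of_ord i == b].
Proof.
have bitn_ind p : bitn [ffun i : 'I_n => nat_of_ord i == b] p = (p == b).
  case: (ltnP p n) => lt_pn; first by rewrite -[p]/(val (Ordinal lt_pn)) bitn_ord ffunE.
  by rewrite bitn_out //; apply/esym/eqP; case: o lt_pn => /=; lia.
rewrite /flips_zero !bitn_ind eqxx eqn_add2l; apply/and3P; split=> //; first by case: o.
by apply/forallP => i; apply/implyP => lt_i; rewrite ffunE neq_ltn ltn_addr.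
Qed.

Definition progress_bound (y r : bits) : R :=
  (if flips_zero r then HLB d y - ((2 * m + 2)%:R - d) else 0) +
  (if flips_one r then d - 2 else 0).

(* Flipping a bit of the first m blocks destroys a (1,1) block, so DLB decreases; otherwise
   only the flips inside block m matter: turning it into (1,1) moves on to later blocks,
   turning it into (0,0) costs 2 - d, and a mixed block leaves HLB unchanged. *)
Lemma progress_xor_le x r : first_blk_ab x ->
  progress d x (xorb_ff x r) <= progress_bound (xorb_ff x r) r.
Proof.
case/and3P=> /eqP x_m x_a x_b; set y := xorb_ff x r.
rewrite /progress /progress_bound (DLB_firstm x_m lt_m) (HLB_firstm _ x_m lt_m).
rewrite blk_zeros_ab x_a /= /flips_zero /flips_one.
have [keep|] := boolP (keeps_prefix r); last first.
  rewrite negb_forall => /existsP[i]; rewrite negb_imply negbK => /andP[lt_i r_i].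
  have y_i : bitn y i = false by rewrite bitn_xor (@bitn_lt_firstm x) ?x_m // bitn_ord r_i.
  have le_F := firstm_le_zero_bit y_i.
  have /DLB_le le_DLB : (firstm y < n./2)%N by lia.
  by rewrite !andbF addr0 leqNgt (_ : DLB y < 2 * m)%N ?mulr0 //; lia.
have y_prefix p : (p < 2 * m)%N -> bitn y p.
  move=> lt_p; have lt_pn : (p < n)%N by lia.
  move/forallP: keep => /(_ (Ordinal lt_pn)); rewrite /= lt_p -bitn_ord.
  by rewrite bitn_xor (@bitn_lt_firstm x) ?x_m // => /negbTE->.
have y_a : bitn y a = ~~ bitn r a by rewrite bitn_xor x_a.
have y_b : bitn y b = bitn r b by rewrite bitn_xor (negbTE x_b).
have y_block : ~~ blk_ones y m ->
    DLB y = (if blk_zeros y m then 2 * m + 1 else 2 * m)%N /\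
    HLB d y = if blk_zeros y m then (2 * m)%:R else (2 * m + 2)%:R - d.
  move/(firstm_eq_blk lt_m y_prefix) => y_m.
  by rewrite (DLB_firstm y_m lt_m) (HLB_firstm _ y_m lt_m).
rewrite !andbT; case r_a: (bitn r a); case r_b: (bitn r b) => /=;
  rewrite blk_ones_ab blk_zeros_ab y_a y_b r_a r_b /= in y_block.
- by have [-> ->] := y_block isT; rewrite subrr mul0r addr0.
- have [-> ->] := y_block isT; rewrite leq_addr mulr1 add0r natrD; lra.
- have ones_m : blk_ones y m by rewrite blk_ones_ab y_a y_b r_a r_b.
  have le_F : (m.+1 <= firstm y)%N.
    apply: firstm_ge_ones => // p lt_p; have [lt_p2m|ge_p] := ltnP p (2 * m).
      exact: y_prefix.
    by apply: (bitn_blk_ones ones_m); lia.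
  by rewrite (_ : 2 * m <= DLB y)%N ?mulr1 ?addr0 //; apply: leq_trans (DLB_ge y); lia.
- by have [-> ->] := y_block isT; rewrite subrr mul0r addr0.
Qed.

Lemma sum_agree_xor x (G : bits -> R) r : first_blk_ab x -> flips_zero r ->
  \sum_(w | agree (2 * m + 2) w x) G (xorb_ff w r) = \sum_(y | ones_prefix m.+1 y) G y.
Proof.
case/and3P=> /eqP x_m x_a x_b /and3P[r_b r_a keep].
rewrite [RHS](reindex_inj (can_inj (xorb_ffK r))) /=; apply: eq_bigl => w.
rewrite /agree /ones_prefix (_ : (2 * m.+1 = 2 * m + 2)%N); last lia.
apply: eq_forallb => i; case lt_i: (i < 2 * m + 2)%N => //=; rewrite ffunE.
have -> : r i = ~~ x i.
  have [lt_i2m|ge_i] := ltnP i (2 * m).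
    move/forallP: keep => /(_ i); rewrite lt_i2m -(bitn_ord x) bitn_lt_firstm ?x_m //=.
    by move/negbTE.
  rewrite -!bitn_ord; have [->|->] : nat_of_ord i = a \/ nat_of_ord i = b by case: o => /=; lia.
    by rewrite x_a (negbTE r_a).
  by rewrite (negbTE x_b) r_b.
by case: (w i); case: (x i).
Qed.

Lemma sum_agree_const x (K : R) : first_blk_ab x ->
  \sum_(w | agree (2 * m + 2) w x) K = \sum_(y | ones_prefix m.+1 y) K.
Proof. by move=> x_ab; rewrite -(sum_agree_xor (fun=> K) x_ab flips_zero_indicator). Qed.

Lemma sum_flips_one_zero : \sum_(r | flips_one r) f r = \sum_(r | flips_zero r) f r.
Proof.
have [lt_a lt_b] : (a < n)%N /\ (b < n)%N by case: o => /=; lia.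
pose t := tperm (Ordinal lt_a) (Ordinal lt_b).
rewrite (sum_permb t); apply: eq_bigl => r.
have t_a : bitn (permb t r) a = bitn r b.
  by rewrite -[a]/(val (Ordinal lt_a)) bitn_permb tpermL -(bitn_ord r).
have t_b : bitn (permb t r) b = bitn r a.
  by rewrite -[b]/(val (Ordinal lt_b)) bitn_permb tpermR -(bitn_ord r).
have t_keep : keeps_prefix (permb t r) = keeps_prefix r.
  apply: eq_forallb => i; rewrite ffunE; case lt_i: (i < 2 * m)%N => //=.
  by rewrite tpermD // -val_eqE /= neq_ltn ltn_addr ?orbT.
by rewrite /flips_one /flips_zero t_a t_b t_keep.
Qed.

Hypothesis le_n4m : (n <= 4 * m)%N.

Lemma sum_flips_zero_le : \sum_(r | flips_zero r) f r <= n%:R^-1.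
Proof.
have lt_b : (b < n)%N by case: o => /=; lia.
pose b0 : 'I_n := Ordinal lt_b.
apply: le_trans (@sum_lowest_one_le b0 _); last by rewrite /b0 /=; case: o => /=; lia.
rewrite [leRHS]big_mkcond [leLHS]big_mkcond /=; apply: ler_sum => r _.
case: ifP => [/and3P[r_b r_a /forallP keep]|_]; last by case: ifP => _; rewrite ?f_ge0.
rewrite ifT // /lowest_one -(bitn_ord r) r_b /=.
apply/forallP => i; apply/implyP => lt_ib.
have [lt_i2m|ge_i] := ltnP i (2 * m); first by have := keep i; rewrite lt_i2m.
have i_a : nat_of_ord i = a by case: o lt_ib r_a r_b => /= lt_ib *; lia.
by rewrite -(bitn_ord r) i_a.
Qed.

Hypothesis n_even : ~~ odd n.
Hypothesis d_ge0 : 0 <= d.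

Definition mean_progress_bound (r : bits) : R :=
  (if flips_zero r then 2 + d else 0) + (if flips_one r then d - 2 else 0).

Lemma sum_agree_progress_bound_le x r : first_blk_ab x ->
  \sum_(w | agree (2 * m + 2) w x) progress_bound (xorb_ff w r) r <=
  \sum_(y | ones_prefix m.+1 y) mean_progress_bound r.
Proof.
move=> x_ab; rewrite !big_split /= (sum_agree_const _ x_ab) lerD //.
case fz: (flips_zero r); last by rewrite !big1.
rewrite (sum_agree_xor (fun y => HLB d y - _) x_ab fz) sumrB lerBlDr -big_split /=.
apply: le_trans (sum_HLB_le n_even d_ge0 lt_m) _; apply: ler_sum => y _.
by rewrite (_ : (2 * m.+1 + 2 = 2 * m + 2 + 2)%N) ?natrD; [lra | lia].
Qed.

Lemma mean_progress_bound_le : \sum_r f r * mean_progress_bound r <= 2 * d / n%:R.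
Proof.
have sum_if (S : pred bits) K : \sum_r f r * (if S r then K else 0) = (\sum_(r | S r) f r) * K.
  rewrite mulr_suml [RHS]big_mkcond; apply: eq_bigr => r _.
  by case: (S r); rewrite ?mulr0 ?mul0r.
rewrite (eq_bigr _ (fun r _ => mulrDr _ _ _)) big_split /= !sum_if sum_flips_one_zero -mulrDr.
rewrite (_ : 2 * d / n%:R = n%:R^-1 * (2 + d + (d - 2))); last by ring.
by apply: ler_wpM2r; [move: d_ge0; lra | exact: sum_flips_zero_le].
Qed.

Lemma sum_agree_progress_le_ab x : first_blk_ab x ->
  \sum_(w | agree (2 * m + 2) w x) \sum_r f r * progress d w (xorb_ff w r) <=
  \sum_(w | agree (2 * m + 2) w x) (2 * d / n%:R).
Proof.
move=> x_ab.
apply: le_trans (_ : _ <= \sum_r f r * \sum_(y | ones_prefix m.+1 y) mean_progress_bound r) _.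
  rewrite exchange_big /=; apply: ler_sum => r _; rewrite -mulr_sumr ler_wpM2l //.
  apply: le_trans (sum_agree_progress_bound_le r x_ab); apply: ler_sum => w agr.
  exact/progress_xor_le/(first_blk_ab_agree x_ab).
under eq_bigr do rewrite mulr_sumr.
rewrite exchange_big (sum_agree_const _ x_ab) /=; apply: ler_sum => y _.
exact: mean_progress_bound_le.
Qed.

End Block.

Lemma sum_agree_progress_le (d : R) m z :
  ~~ odd n -> (n <= 4 * m)%N -> (m < n./2)%N -> 0 <= d -> DLB z = (2 * m)%N ->
  \sum_(x | agree (2 * m + 2) x z) \sum_r f r * progress d x (xorb_ff x r)
    <= \sum_(x | agree (2 * m + 2) x z) (2 * d / n%:R).
Proof.
move=> n_even le_n4m lt_m d_ge0 DLBz.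
have [z_m z_mixed] := DLB_eq_double lt_m DLBz.
have z_ones : ~~ blk_ones z m by rewrite -z_m blk_ones_firstm ?z_m.
have [o z_ab] := mixed_blk_orient z_ones z_mixed.
by apply: (sum_agree_progress_le_ab (o := o)) => //; rewrite /first_blk_ab z_m eqxx.
Qed.

End SymmetricDistribution.

Section UnaryUnbiased.
Variables (R : numDomainType) (V : bits -> bits -> R).
Hypothesis V_unbiased : unary_unbiased V.

Lemma unary_unbiased_xor x y : V x y = V [ffun => false] (xorb_ff y x).
Proof.
have [_ _ V_xor _] := V_unbiased; rewrite (V_xor x y x); congr V.
by apply/ffunP => i; rewrite !ffunE addbb.
Qed.

Lemma unary_unbiased_permb s r : V [ffun => false] (permb s r) = V [ffun => false] r.
Proof.
have [_ _ _ V_perm] := V_unbiased; rewrite [RHS](V_perm s); congr V.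
by apply/ffunP => i; rewrite !ffunE.
Qed.

Lemma sum_unary_unbiased (G : bits -> R) x :
  (\sum_y V x y * G y = \sum_r V [ffun => false] r * G (xorb_ff x r))%R.
Proof.
have xor_inj : injective (xorb_ff x).
  by move=> r1 r2; rewrite !(xorb_ffC x) => /(can_inj (xorb_ffK x)).
rewrite (reindex_inj xor_inj); apply: eq_bigr => r _.
by rewrite unary_unbiased_xor (xorb_ffC x r) xorb_ffK.
Qed.

End UnaryUnbiased.

End Bits.

Local Open Scope ring_scope.

Section ClassAverage.
Variables (T : finType) (R : realFieldType) (e : rel T) (px : T -> R) (c : R).
Hypothesis c_ge0 : 0 <= c.
Hypothesis px_ge0 : forall x, 0 <= px x.
Hypothesis px_sum1 : \sum_x px x = 1.
Hypothesis px_class : forall x, px x = c * \sum_(z | e x z) px z.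

Lemma sum_px_class (g : T -> R) :
  \sum_x px x * g x = c * \sum_z px z * \sum_(x | e x z) g x.
Proof.
under eq_bigr => x _ do rewrite px_class -mulrA mulr_suml big_mkcond.
rewrite -mulr_sumr exchange_big; congr (c * _); apply: eq_bigr => z _ /=.
rewrite mulr_sumr [RHS]big_mkcond; apply: eq_bigr => x _ /=.
by case: (e x z); rewrite ?mulr0.
Qed.

Lemma class_average_le (g : T -> R) K :
  (forall z, px z != 0 -> \sum_(x | e x z) g x <= \sum_(x | e x z) K) ->
  \sum_x px x * g x <= K.
Proof.
move=> g_class.
rewrite -[leRHS]mul1r -px_sum1 mulr_suml (sum_px_class (fun=> K)) sum_px_class.
rewrite ler_wpM2l //; apply: ler_sum => z _.
by have [->|/g_class] := eqVneq (px z) 0; rewrite ?mul0r // => /(ler_wpM2l (px_ge0 z)).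
Qed.

End ClassAverage.

Theorem lemma7 (R : realFieldType) (n m : nat) (delta : R)
  (px : {ffun 'I_n -> bool} -> R) (V : {ffun 'I_n -> bool} -> {ffun 'I_n -> bool} -> R) :
  (0 < n)%N -> ~~ odd n ->
  (n <= 4 * m)%N -> (m < n./2)%N ->
  0 < delta -> delta < 2 ->
  (* px is a probability mass function of x *)
  (forall x, 0 <= px x) -> \sum_(x : {ffun 'I_n -> bool}) px x = 1 ->
  (* DLB(x) = 2m almost surely *)
  (forall x, px x != 0 -> DLB x = (2 * m)%N) ->
  (* bits x_i, i in [2m+3..n] (0-indexed: i >= 2m+2), are i.i.d. uniform and
     independent of the remaining bits *)
  (forall x, px x = (2%:R ^- (n - (2 * m + 2))) *
       \sum_(z : {ffun 'I_n -> bool} | [forall i : 'I_n, ((i < 2 * m + 2)%N) ==> (z i == x i)]) px z) ->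
  unary_unbiased V ->
  \sum_(x : {ffun 'I_n -> bool}) px x * \sum_(y : {ffun 'I_n -> bool}) V x y *
      ((HLB delta y - HLB delta x) * (DLB x <= DLB y)%N%:R)
    <= 2 * delta / n%:R.
Proof.
move=> _ n_even le_n4m lt_m d_gt0 _ px_ge0 px_sum1 px_DLB px_class V_unbiased.
have [V_ge0 V_sum1 _ _] := V_unbiased.
apply: (class_average_le (e := agree (2 * m + 2)) _ px_ge0 px_sum1 px_class) => [|z pz].
  by rewrite invr_ge0 exprn_ge0.
under eq_bigr do rewrite sum_unary_unbiased //.
apply: sum_agree_progress_le => //; last exact: px_DLB.
- exact: unary_unbiased_permb.
- exact: ltW.
Qed.
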